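(* Let $t_1,x_1,t_2,x_2,b$ satisfy $0<t_1<t_2$, $\frac{x_1}{t_1}>\frac{x_2}{t_2}$, $0\le b\le\frac{(x_2-x_1)^2}{t_2-t_1}+\frac{x_1^2}{t_1}-\frac{x_2^2}{t_2}$. Let $(F,\rho)$ be a feasible pair minimizing $I_2$, with $F$ concave, $F'(t)\le\frac{F(t)}{t}$ on $[t_1,t_2]$, and $\rho$ nonincreasing, and let $g=g(F,\rho,b)$. If $g=0$ on an interval $[s_1,s_2]\subset[t_1,t_2]$, then $F'$ and $\rho$ are absolutely continuous on $[s_1,s_2]$.
   Context: A pair $(F,\rho)$ is feasible if $F:[t_1,t_2]\to\mathbb R$ is absolutely continuous with $F(t_1)=x_1$, $F(t_2)=x_2$, $\rho:[t_1,t_2]\to[0,\infty)$ is Lebesgue measurable, and $g(F,\rho,b)(t):=b-\frac{F(t_1)^2}{t_1}+\int_{t_1}^t(\rho(\tau)-F'(\tau)^2)d\tau+\frac{F(t)^2}{t}\ge0$ for all $t\in[t_1,t_2]$. $I_2(F,\rho)=\frac43\int_{t_1}^{t_2}\rho^{3/2}dt$. *)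

From HB Require Import structures.
From mathcomp Require Import all_boot all_order all_algebra.
From mathcomp Require Import all_classical all_reals all_analysis.
Set Implicit Arguments. Unset Strict Implicit. Unset Printing Implicit Defensive.
Import Order.TTheory GRing.Theory Num.Theory.
Import numFieldNormedType.Exports.
Local Open Scope classical_set_scope.
Local Open Scope ring_scope.

Section Defs.
Variable R : realType.

Definition abs_continuous (a b : R) (f : R -> R) : Prop :=
  forall e : R, 0 < e -> exists2 d : R, 0 < d &
    forall (n : nat) (u v : 'I_n -> R),
      (forall i, a <= u i /\ u i <= v i /\ v i <= b) ->
      (forall i j, i != j -> v i <= u j \/ v j <= u i) ->
      \sum_(i < n) (v i - u i) < d ->
      \sum_(i < n) `|f (v i) - f (u i)| < e.

Definition concave_on (a b : R) (f : R -> R) : Prop :=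
  forall x y l : R, a <= x <= b -> a <= y <= b -> 0 <= l <= 1 ->
    l * f x + (1 - l) * f y <= f (l * x + (1 - l) * y).

(* F' : the (a.e. defined) derivative, taken as mathcomp's derive1 *)
Definition gfun (t1 : R) (F rho : R -> R) (b : R) (t : R) : R :=
  b - F t1 ^+ 2 / t1
    + Rintegral (@lebesgue_measure R) `[t1, t]%classic
        (fun s => rho s - (derive1 F s) ^+ 2)
    + F t ^+ 2 / t.

(* feasible pairs; the integral in g is required to make sense, which we
   encode by Lebesgue integrability of rho and F'^2 on [t1, t2] *)
Definition feasible (t1 x1 t2 x2 b : R) (F rho : R -> R) : Prop :=
  abs_continuous t1 t2 F /\ F t1 = x1 /\ F t2 = x2 /\
      measurable_fun `[t1, t2]%classic rho /\
      (forall t, t1 <= t <= t2 -> 0 <= rho t) /\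
      (@lebesgue_measure R).-integrable `[t1, t2]%classic (fun s => (rho s)%:E) /\
      (@lebesgue_measure R).-integrable `[t1, t2]%classic
        (fun s => ((derive1 F s) ^+ 2)%:E) /\
      (forall t, t1 <= t <= t2 -> 0 <= gfun t1 F rho b t).

Definition I2 (t1 t2 : R) (rho : R -> R) : \bar R :=
  (4 / 3)%:E * \int[(@lebesgue_measure R)]_(s in `[t1, t2]%classic)
                 ((rho s) `^ (3 / 2))%:E.

End Defs.

From HB Require Import structures.
From mathcomp Require Import all_boot all_order all_algebra.
From mathcomp Require Import all_classical all_reals all_analysis.
From mathcomp Require Import ring lra.
Set Implicit Arguments. Unset Strict Implicit. Unset Printing Implicit Defensive.
Import Order.TTheory GRing.Theory Num.Theory.
Import numFieldNormedType.Exports.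
Local Open Scope classical_set_scope.
Local Open Scope ring_scope.

(* Write phi t = F t / t.  Where g vanishes, F t ^ 2 = - t (c + \int_t1^t (rho - F'^2)) with a
   constant c; differentiating at Lebesgue points gives rho = (F' - phi)^2 almost everywhere,
   that is F' = phi - sqrt rho since F' <= phi.  (Derivability of F^2 says nothing about F at a
   zero of F, but a concave function vanishing at three points vanishes between them, so at
   most two zeros of F are points of non-differentiability.)  Concavity makes F' nonincreasing
   and sqrt rho is nonincreasing, so phi = F' + sqrt rho is a sum of two nonincreasing
   functions; the increments of each are dominated by those of phi, which is absolutely
   continuous as the quotient of F by t >= s1 > 0. *)

Section absolute_continuity.
Variable R : realType.
Implicit Types (a b : R) (f g : R -> R).

Lemma abs_continuous_subitv a b c d f : a <= c -> d <= b ->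
  abs_continuous a b f -> abs_continuous c d f.
Proof.
move=> ac db acf e e0; have [del del0 hdel] := acf e e0.
exists del => // n u v uv; apply: hdel => i.
by have [cu [uvi vd]] := uv i; split; [exact: le_trans cu|split=> //; exact: le_trans db].
Qed.

Lemma abs_continuous_dominated a b f g (C1 C2 : R) : 0 <= C1 -> 0 <= C2 ->
  abs_continuous a b f ->
  (forall u v, a <= u -> u <= v -> v <= b ->
     `|g v - g u| <= C1 * `|f v - f u| + C2 * (v - u)) ->
  abs_continuous a b g.
Proof.
move=> C10 C20 acf dom e e0.
have e1 : 0 < e / 2 / (C1 + 1) by rewrite !divr_gt0 // ltr_wpDl.
have [d d0 hd] := acf _ e1.
exists (Num.min d (e / 2 / (C2 + 1))); first by rewrite lt_min d0 !divr_gt0 // ltr_wpDl.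
move=> n u v uv disj; rewrite lt_min => /andP[sd sd2].
have := hd n u v uv disj sd.
set A := \sum_(i < n) _; set L := \sum_(i < n) _ in sd sd2 * => sA.
have A0 : 0 <= A by rewrite sumr_ge0.
have L0 : 0 <= L by rewrite sumr_ge0 // => i _; have [_ [? _]] := uv i; rewrite subr_ge0.
have gA : \sum_(i < n) `|g (v i) - g (u i)| <= C1 * A + C2 * L.
  rewrite !mulr_sumr -big_split /=; apply: ler_sum => i _.
  by have [? [? ?]] := uv i; apply: dom.
apply: (le_lt_trans gA); rewrite [e]splitr; apply: ler_ltD.
- rewrite (le_trans (y := (C1 + 1) * A)) ?ler_wpM2r ?lerDl //.
  by rewrite -ler_pdivlMl ?ltr_wpDl // mulrC ltW.
- rewrite (le_lt_trans (y := (C2 + 1) * L)) ?ler_wpM2r ?lerDl //.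
  by rewrite -ltr_pdivlMl ?ltr_wpDl // mulrC.
Qed.

Lemma abs_continuous_uniform a b f e : 0 < e -> abs_continuous a b f ->
  exists2 d, 0 < d & forall x y, a <= x <= b -> a <= y <= b ->
    `|x - y| < d -> `|f x - f y| < e.
Proof.
move=> e0 acf; have [d d0 hd] := acf e e0; exists d => // x y xab yab xyd.
wlog xy : x y xab yab xyd / x <= y.
  move=> W; have [/W|/ltW yx] := leP x y; first exact.
  by rewrite distrC; apply: W => //; rewrite distrC.
have := hd 1%N (fun _ => x) (fun _ => y); rewrite !big_ord1 distrC; apply.
- by move=> _; case/andP: xab => -> _; case/andP: yab => _ ->.
- by move=> i j; rewrite !ord1.
- by rewrite distrC ger0_norm ?subr_ge0 in xyd.
Qed.

Lemma abs_continuous_continuous a b f x : abs_continuous a b f -> a < x < b ->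
  {for x, continuous f}.
Proof.
move=> acf xab; apply/cvgrPdist_lt => e e0.
have [d d0 hd] := abs_continuous_uniform e0 acf.
have xin : x \in `]a, b[ by rewrite in_itv.
near=> y; have /[!in_itv] /andP[ay yb] : y \in `]a, b[ by near: y; exact: near_in_itvoo.
by case/andP: xab => ax xb; apply: hd; rewrite ?ltW.
Unshelve. all: by end_near.
Qed.

Lemma abs_continuous_bounded a b f : abs_continuous a b f ->
  exists2 M, 0 <= M & forall t, a <= t <= b -> `|f t| <= M.
Proof.
move=> acf; have [d d0 hd] := abs_continuous_uniform ltr01 acf.
have step n : forall t, a <= t <= b -> t <= a + n%:R * (d / 2) -> `|f t| <= `|f a| + n%:R.
  elim: n => [t /andP[le_at _]|n IH t tab tn].
    by rewrite mul0r addr0 addr0 => ta; rewrite (@le_anti _ _ t a) ?le_at ?ta.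
  have [tn'|tn'] := leP t (a + n%:R * (d / 2)).
    by rewrite (le_trans (IH t tab tn')) // lerD2l ler_nat.
  have /andP[le_at tb] := tab; rewrite -natr1 mulrDl mul1r in tn.
  have d20 : 0 < d / 2 by rewrite divr_gt0.
  set s := Num.max a (t - d / 2).
  have [as_ ts_] : a <= s /\ t - d / 2 <= s by rewrite !le_max !lexx orbT.
  have s_eq : s = a \/ s = t - d / 2 by rewrite /s; case: leP; [right|left].
  have sab : a <= s <= b by apply/andP; split; case: s_eq; lra.
  have n0 : 0 <= n%:R * (d / 2) by rewrite mulr_ge0 // ltW.
  have sn : s <= a + n%:R * (d / 2) by case: s_eq; lra.
  have ts : `|t - s| < d by rewrite ger0_norm; case: s_eq; lra.
  have := hd t s tab sab ts.
  have := IH s sab sn; have := lerB_dist (f t) (f s); rewrite -natr1; lra.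
have [N bN] : exists N : nat, b <= a + N%:R * (d / 2).
  exists (Num.trunc ((b - a) / (d / 2))).+1.
  by rewrite -lerBlDl -ler_pdivrMr ?divr_gt0 // ltW // truncnS_gt.
exists (`|f a| + N%:R); first by rewrite addr_ge0.
move=> t tab; apply: (step N t tab); case/andP: tab => _ tb; exact: le_trans bN.
Qed.

Lemma abs_continuous_sqr a b f : abs_continuous a b f ->
  abs_continuous a b (fun t => f t ^+ 2).
Proof.
move=> acf; have [M M0 fM] := abs_continuous_bounded acf.
apply: (abs_continuous_dominated (C1 := 2 * M) (C2 := 0)) acf _ => //.
  by rewrite mulr_ge0.
move=> u v au uv vb; rewrite mul0r addr0 subr_sqr normrM mulrC ler_wpM2r //.
have := fM u; have := fM v; rewrite au vb (le_trans au uv) (le_trans uv vb).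
move=> /(_ isT) fvM /(_ isT) fuM; rewrite (le_trans (ler_normD _ _)) //; lra.
Qed.

Lemma abs_continuous_div_id a b f : 0 < a -> abs_continuous a b f ->
  abs_continuous a b (fun t => f t / t).
Proof.
move=> a0 acf; have [M M0 fM] := abs_continuous_bounded acf.
apply: (abs_continuous_dominated (C1 := a^-1) (C2 := M / (a * a))) acf _.
- by rewrite invr_ge0 ltW.
- by rewrite divr_ge0 // mulr_ge0 // ltW.
move=> u v au uv vb.
have u0 : 0 < u by exact: lt_le_trans au.
have v0 : 0 < v by exact: lt_le_trans uv.
have -> : f v / v - f u / u = (f v - f u) / v + f u * (u - v) / (u * v).
  by field; rewrite !gt_eqF.
apply: (le_trans (ler_normD _ _)); apply: lerD.
  rewrite normrM normfV (gtr0_norm v0) mulrC ler_wpM2r //.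
  by rewrite lef_pV2 ?posrE // (le_trans au).
rewrite normrM normfV normrM (gtr0_norm (mulr_gt0 u0 v0)) distrC.
rewrite (@ger0_norm _ (v - u)) ?subr_ge0 // mulrAC ler_wpM2r ?subr_ge0 //.
apply: ler_pM => //.
- by rewrite invr_ge0 ltW // mulr_gt0.
- by apply: fM; rewrite au (le_trans uv vb).
- rewrite lef_pV2 ?posrE ?mulr_gt0 //; apply: ler_pM; rewrite ?(ltW a0) //; exact: le_trans uv.
Qed.

Lemma abs_continuous_nonincreasing_split a b f g :
  abs_continuous a b f ->
  (forall x y, a <= x -> x <= y -> y <= b -> f y - f x <= g y - g x <= 0) ->
  abs_continuous a b g /\ abs_continuous a b (fun t => f t - g t).
Proof.
move=> acf split_fg.
have dom h : (forall u v, a <= u -> u <= v -> v <= b -> `|h v - h u| <= `|f v - f u|) ->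
    abs_continuous a b h.
  move=> hf; apply: (abs_continuous_dominated (C1 := 1) (C2 := 0)) acf _ => // u v au uv vb.
  by rewrite mul1r mul0r addr0 hf.
split; apply: dom => u v au uv vb; have /andP[fg g0] := split_fg u v au uv vb.
  by rewrite !ler0_norm ?lerN2 //; lra.
by rewrite ler0_norm ?ler0_norm; lra.
Qed.
End absolute_continuity.

Section lebesgue_null_sets.
Variable R : realType.
Local Notation mu := (@lebesgue_measure R).

Lemma lebesgue_negligible_set1 (p : R) : mu.-negligible [set p].
Proof. by exists [set p]; split => //; rewrite lebesgue_measure_set1. Qed.

Lemma negligible_no_between (Z : set R) :
  (forall a m c, Z a -> Z m -> Z c -> a < m -> m < c -> False) ->
  mu.-negligible Z.
Proof.
move=> nomid; suff [p [q Zpq]] : exists p q, Z `<=` [set p; q].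
  have := negligibleU (lebesgue_negligible_set1 p) (lebesgue_negligible_set1 q).
  exact: negligibleS.
have [[p Zp]|nZ] := pselect (exists p, Z p); last first.
  by exists 0, 0 => z Zz; case: nZ; exists z.
have [[q [Zq qp]]|nq] := pselect (exists q, Z q /\ q != p); last first.
  exists p, p => z Zz; left; apply: contrapT => zp; apply: nq; exists z.
  by split => //; apply/eqP.
wlog pq : p q Zp Zq qp / p < q.
  move=> W; have [pq|qp'] := ltP p q; first exact: W pq.
  by apply: (W q p); rewrite // 1?eq_sym // lt_neqAle qp.
exists p, q => z Zz; have [zp|pz|->] := ltgtP z p; [|have [zq|qz|->] := ltgtP z q|].
- by case: (nomid z p q).
- by case: (nomid p z q).
- by case: (nomid p q z).
- by right.
- by left.
Qed.

Lemma ae_neq (a : R) : {ae mu, forall x, x != a}.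
Proof.
apply: negligibleS (lebesgue_negligible_set1 a) => x /= /negP.
by rewrite negbK => /eqP.
Qed.

Lemma ae_itv_oo_cc (a b : R) (P : R -> Prop) :
  {ae mu, forall x, a < x < b -> P x} -> {ae mu, forall x, a <= x <= b -> P x}.
Proof.
move=> aeP; have aeF := ae_filter_ringOfSetsType mu.
have aeab := filterS2 aeF (fun x (xa : x != a) (xb : x != b) => conj xa xb) (ae_neq a) (ae_neq b).
apply: filterS2 aeP aeab => x Px [xa xb] /andP[ax xb'].
by apply: Px; rewrite !lt_neqAle ax xb' eq_sym xa xb.
Qed.

Lemma ae_exists_in_itv (P : R -> Prop) (a c : R) : a < c ->
  {ae mu, forall x, P x} -> exists x, a < x < c /\ P x.
Proof.
move=> ac [N [mN N0 PN]]; apply: contrapT => nex.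
have acN : `]a, c[ `<=` N by move=> x xac; apply: PN => Px; apply: nex; exists x.
have := @le_measure _ _ _ mu `]a, c[%classic N; rewrite !inE.
move=> /(_ (measurable_itv _) mN acN) muN; have : (mu `]a, c[ <= 0)%E by rewrite -N0.
by rewrite lebesgue_measure_itv /= lte_fin ac -EFinD lee_fin subr_le0 leNgt ac.
Qed.
End lebesgue_null_sets.

Lemma derive1_cvg (R : realType) (F : R -> R) x : derivable F x 1 ->
  h^-1 * (F (h + x) - F x) @[h --> 0^'] --> derive1 F x.
Proof.
move=> dF; rewrite /derive1.
suff -> : (fun h => h^-1 * (F (h + x) - F x)) =
          (fun h => h^-1 *: ((F \o shift x) (h *: 1) - F x)) by [].
by apply/funext => h; rewrite /= /shift scaler1.
Qed.

Section concavity.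
Variables (R : realType) (t1 t2 : R) (F : R -> R).
Hypothesis cF : concave_on t1 t2 F.

Lemma concave_on_chord p z r : t1 <= p -> p < r -> r <= t2 -> p <= z <= r ->
  (r - z) / (r - p) * F p + (z - p) / (r - p) * F r <= F z.
Proof.
move=> t1p pr rt2 /andP[pz zr].
have rp : 0 < r - p by rewrite subr_gt0.
have l01 : 0 <= (r - z) / (r - p) <= 1.
  apply/andP; split; first by rewrite divr_ge0 ?subr_ge0 // ltW.
  by rewrite ler_pdivrMr // mul1r; lra.
have hp : t1 <= p <= t2 by rewrite t1p (le_trans (ltW pr)).
have hr : t1 <= r <= t2 by rewrite rt2 (le_trans t1p (ltW pr)).
have := cF hp hr l01.
have -> : (r - z) / (r - p) * p + (1 - (r - z) / (r - p)) * r = z.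
  by field; rewrite gt_eqF.
have -> : 1 - (r - z) / (r - p) = (z - p) / (r - p) by field; rewrite gt_eqF.
exact.
Qed.

Lemma concave_on_slope_le_derive1 x y : t1 <= x -> x < y -> y <= t2 ->
  derivable F x 1 -> (F y - F x) / (y - x) <= derive1 F x.
Proof.
move=> t1x xy yt2 /derive1_cvg/cvg_dnbhs_at_right dF.
have yx : 0 < y - x by rewrite subr_gt0.
apply: (cvgr_to_ge dF); near=> h.
have h0 : 0 < h by near: h; exact: nbhs_right_gt.
have hyx : h <= y - x by near: h; exact: nbhs_right_le.
have hx : x <= h + x <= y by apply/andP; split; lra.
have := concave_on_chord t1x xy yt2 hx.
have -> : (y - (h + x)) / (y - x) * F x + (h + x - x) / (y - x) * F y =
          F x + h * ((F y - F x) / (y - x)) by field; rewrite gt_eqF.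
move=> chord; rewrite -(ler_pM2l h0) mulVKf ?gt_eqF //; lra.
Unshelve. all: by end_near.
Qed.

Lemma concave_on_derive1_le_slope x y : t1 <= x -> x < y -> y <= t2 ->
  derivable F y 1 -> derive1 F y <= (F y - F x) / (y - x).
Proof.
move=> t1x xy yt2 /derive1_cvg/cvg_dnbhs_at_left dF.
have yx : 0 < y - x by rewrite subr_gt0.
apply: (cvgr_to_le dF); near=> h.
have h0 : h < 0 by near: h; exact: nbhs_left_lt.
have hyx : x - y <= h by near: h; apply: nbhs_left_ge; rewrite subr_lt0.
have hy : x <= h + y <= y by apply/andP; split; lra.
have := concave_on_chord t1x xy yt2 hy.
have -> : (y - (h + y)) / (y - x) * F x + (h + y - x) / (y - x) * F y =
          F y + h * ((F y - F x) / (y - x)) by field; rewrite gt_eqF.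
move=> chord; rewrite -(ler_nM2l h0) mulVKf ?lt_eqF //; lra.
Unshelve. all: by end_near.
Qed.

Lemma concave_on_derive1_nonincreasing x y : t1 <= x -> x < y -> y <= t2 ->
  derivable F x 1 -> derivable F y 1 -> derive1 F y <= derive1 F x.
Proof.
move=> t1x xy yt2 dx dy.
exact: le_trans (concave_on_derive1_le_slope t1x xy yt2 dy)
                (concave_on_slope_le_derive1 t1x xy yt2 dx).
Qed.

Lemma concave_on_eq0_between p q r : t1 <= p -> p < q -> q < r -> r <= t2 ->
  F p = 0 -> F q = 0 -> F r = 0 -> forall z, p <= z <= r -> F z = 0.
Proof.
move=> t1p pq qr rt2 Fp Fq Fr z /andP[pz zr].
have Fz_ge0 : 0 <= F z.
  have := concave_on_chord t1p (lt_trans pq qr) rt2 (_ : p <= z <= r).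
  by rewrite pz zr Fp Fr !mulr0 addr0; apply.
apply/eqP; rewrite eq_le Fz_ge0 andbT; case: (ltgtP z q) => [zq|qz|->]; last by rewrite Fq.
  have := concave_on_chord (le_trans t1p pz) (lt_trans zq qr) rt2 (_ : z <= q <= r).
  rewrite (ltW zq) (ltW qr) Fr Fq mulr0 addr0 => /(_ isT).
  by rewrite pmulr_rle0 // divr_gt0 // subr_gt0 // (lt_trans zq).
have := concave_on_chord t1p (lt_trans pq qz) (le_trans zr rt2) (_ : p <= q <= z).
rewrite (ltW pq) (ltW qz) Fp Fq mulr0 add0r => /(_ isT).
by rewrite pmulr_rle0 // divr_gt0 // subr_gt0 // (lt_trans pq).
Qed.

Lemma concave_on_nonderivable_zeros_negligible :
  (@lebesgue_measure R).-negligible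
    [set x | t1 < x < t2 /\ F x = 0 /\ ~ derivable F x 1].
Proof.
apply: negligible_no_between => a m c [/andP[t1a _] [Fa _]] [_ [Fm ndm]].
move=> [/andP[_ ct2] [Fc _]] am mc; apply: ndm.
have F0 := concave_on_eq0_between (ltW t1a) am mc (ltW ct2) Fa Fm Fc.
have min : m \in `]a, c[ by rewrite in_itv /= am mc.
apply: (@near_eq_derivable _ _ _ (cst 0)); last exact: derivable_cst.
near=> y; have /[!in_itv] /andP[ay yc] : y \in `]a, c[ by near: y; exact: near_in_itvoo.
by rewrite F0 // !ltW.
Unshelve. all: by end_near.
Qed.
End concavity.

Lemma derivable_of_sqr (R : realType) (F : R -> R) x : {for x, continuous F} ->
  F x != 0 -> derivable (fun y => F y ^+ 2) x 1 -> derivable F x 1.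
Proof.
move=> cF Fx0 /derivableP dF2.
have ds : derivable (Num.sqrt \o (fun y => F y ^+ 2)) x 1.
  have Fx2 : 0 < F x ^+ 2 by rewrite exprn_even_gt0.
  by have [] := is_derive1_comp (f := Num.sqrt) (g := fun y => F y ^+ 2) (is_derive1_sqrt Fx2) dF2.
have [Fpos|Fneg] := ltP 0 (F x).
  apply: near_eq_derivable ds; near=> y.
  have Fy : 0 < F y by near: y; exact: cvgr_gt cF _ Fpos.
  by rewrite /= sqrtr_sqr gtr0_norm.
have {Fneg}Fneg : F x < 0 by rewrite lt_neqAle Fx0.
apply: (near_eq_derivable (f := fun y => - (Num.sqrt \o (fun y => F y ^+ 2)) y)).
  near=> y; have Fy : F y < 0 by near: y; exact: cvgr_lt cF _ Fneg.
  by rewrite /= sqrtr_sqr ltr0_norm // opprK.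
exact: derivableN.
Unshelve. all: by end_near.
Qed.

Section dense_splitting.
Variables (R : realType) (a b : R) (f g : R -> R) (D : R -> Prop).
Hypothesis acf : abs_continuous a b f.
Hypothesis g_noninc : forall x y, a <= x -> x <= y -> y <= b -> g y <= g x.
Hypothesis D_dense :
  forall u v, a <= u -> u < v -> v <= b -> exists x, u < x < v /\ D x.
Hypothesis f_g_D : forall x y, D x -> D y -> x < y -> f y - f x <= g y - g x.

Lemma dense_split_nonincreasing x y : a <= x -> x <= y -> y <= b -> f y <= f x.
Proof.
move=> ax xy yb; have [<-//|xy'] := eqVneq x y.
have {xy'}xy : x < y by rewrite lt_neqAle xy' xy.
apply/ler_addgt0Pr => e e0.
have [d d0 hd] := abs_continuous_uniform (divr_gt0 e0 (ltr0n _ 2)) acf.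
set c := Num.min d (y - x).
have [c0 cd cyx] : [/\ 0 < c, c <= d & c <= y - x].
  by split; rewrite /c ?lt_min ?d0 ?subr_gt0 ?xy ?ge_min ?lexx ?orbT.
have [x' [/andP[xx' x'c] Dx']] : exists x', x < x' < x + c / 3 /\ D x'.
  by apply: D_dense => //; lra.
have [y' [/andP[y'c yy'] Dy']] : exists y', y - c / 3 < y' < y /\ D y'.
  by apply: D_dense => //; lra.
have := f_g_D Dx' Dy' ltac:(lra).
have := g_noninc (x := x') (y := y') ltac:(lra) ltac:(lra) ltac:(lra).
have := hd x x' ltac:(lra) ltac:(lra) ltac:(rewrite ltr0_norm; lra).
have := hd y y' ltac:(lra) ltac:(lra) ltac:(rewrite gtr0_norm; lra).
rewrite !ltr_norml; lra.
Qed.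

Lemma dense_split_itv_oo x y : a < x -> x <= y -> y < b -> f y - f x <= g y - g x.
Proof.
move=> ax xy yb; apply/ler_addgt0Pr => e e0.
have [d d0 hd] := abs_continuous_uniform (divr_gt0 e0 (ltr0n _ 2)) acf.
set c := Num.min d (Num.min (x - a) (b - y)).
have [c0 cd cxa cby] : [/\ 0 < c, c <= d, c <= x - a & c <= b - y].
  by split; rewrite /c ?lt_min ?d0 ?subr_gt0 ?ax ?yb ?ge_min ?lexx ?orbT.
have [x' [/andP[x'c x'x] Dx']] : exists x', x - c / 2 < x' < x /\ D x'.
  by apply: D_dense => //; lra.
have [y' [/andP[yy' y'c] Dy']] : exists y', y < y' < y + c / 2 /\ D y'.
  by apply: D_dense => //; lra.
have := f_g_D Dx' Dy' ltac:(lra).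
have := g_noninc (x := x') (y := x) ltac:(lra) ltac:(lra) ltac:(lra).
have := g_noninc (x := y) (y := y') ltac:(lra) ltac:(lra) ltac:(lra).
have := hd x x' ltac:(lra) ltac:(lra) ltac:(rewrite gtr0_norm; lra).
have := hd y y' ltac:(lra) ltac:(lra) ltac:(rewrite ltr0_norm; lra).
rewrite !ltr_norml; lra.
Qed.

Lemma dense_split_extend : a < b ->
  exists r : R -> R, (forall t, a < t < b -> r t = g t) /\
    forall x y, a <= x -> x <= y -> y <= b -> f y - f x <= r y - r x <= 0.
Proof.
move=> ab; set E := g @` `]a, b[.
have mab : a < (a + b) / 2 < b by apply/andP; split; lra.
have E0 : E !=set0 by exists (g ((a + b) / 2)), ((a + b) / 2).
have Eub : has_ubound E.
  by exists (g a) => _ [z /= /[!in_itv]/= /andP[az zb] <-]; apply: g_noninc => //; exact: ltW.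
have Elb : has_lbound E.
  by exists (g b) => _ [z /= /[!in_itv]/= /andP[az zb] <-]; apply: g_noninc => //; exact: ltW.
have Einv z : a < z < b -> inf E <= g z <= sup E.
  move=> zab; have zE : E (g z) by exists z; rewrite //= in_itv.
  by rewrite (ub_le_sup Eub zE) (ge_inf Elb zE).
have supE y : a < y < b -> sup E <= g y - f y + f a.
  move=> /andP[ay yb]; apply: ge_sup E0 _ => _ [z /= /[!in_itv]/= /andP[az zb] <-].
  have := dense_split_nonincreasing (x := a) (y := z) (lexx _) (ltW az) (ltW zb).
  have [zy|yz] := leP z y.
    by have := dense_split_itv_oo az zy yb; lra.
  have := dense_split_nonincreasing (x := a) (y := y) (lexx _) (ltW ay) (ltW yb).
  by have := g_noninc (ltW ay) (ltW yz) (ltW zb); lra.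
have infE x : a < x < b -> g x + f b - f x <= inf E.
  move=> /andP[ax xb]; apply: lb_le_inf E0 _ => _ [z /= /[!in_itv]/= /andP[az zb] <-].
  have := dense_split_nonincreasing (x := z) (y := b) (ltW az) (ltW zb) (lexx _).
  have [xz|zx] := leP x z.
    by have := dense_split_itv_oo ax xz zb; lra.
  have := dense_split_nonincreasing (x := x) (y := b) (ltW ax) (ltW xb) (lexx _).
  by have := g_noninc (ltW az) (ltW zx) (ltW xb); lra.
(* at the endpoints r takes the one-sided limits of the monotone g *)
pose r t := if t <= a then sup E else if t < b then g t else inf E.
have ra : r a = sup E by rewrite /r lexx.
have rb : r b = inf E by rewrite /r leNgt ab /= ltxx.
have rg t : a < t < b -> r t = g t by move=> /andP[ta tb]; rewrite /r leNgt ta /= tb.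
exists r; split => // x y ax xy yb.
have [<-|xy'] := eqVneq x y; first by rewrite !subrr lexx.
have {xy'}xy : x < y by rewrite lt_neqAle xy' xy.
case: (ltgtP a x) ax => // [ax|xa] _; case: (ltgtP y b) yb => // [yb|yb] _.
- rewrite !rg ?ax ?yb ?(lt_trans ax xy) ?(lt_trans xy yb) //.
  have := g_noninc (ltW ax) (ltW xy) (ltW yb); have := dense_split_itv_oo ax (ltW xy) yb.
  lra.
- subst y; have xab : a < x < b by rewrite ax xy.
  rewrite rb rg //; have := infE x xab; have := Einv x xab; lra.
- subst x; have yab : a < y < b by rewrite xy yb.
  rewrite ra rg //; have := supE y yab; have := Einv y yab; lra.
- subst x y; rewrite ra rb; have := supE _ mab; have := infE _ mab; have := Einv _ mab; lra.
Qed.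
End dense_splitting.

Lemma ae_is_derive_Rintegral (R : realType) (a b : R) (f : R -> R) :
  (@lebesgue_measure R).-integrable `[a, b] (EFin \o f) ->
  {ae (@lebesgue_measure R), forall x, a < x < b ->
    is_derive x 1 (fun y => \int[lebesgue_measure]_(t in `[a, y]) f t) (f x)}.
Proof.
move=> intf; set fab := f \_ `[a, b].
have intfab : (@lebesgue_measure R).-integrable `[a, b] (EFin \o fab).
  by apply: eq_integrable intf => // x xab /=; rewrite /fab patchE xab.
have fab_itv y t : y <= b -> t \in `[a, y] -> fab t = f t.
  move=> yb; rewrite !in_itv /= => /andP[le_at ty].
  by rewrite /fab patchE mem_set //= in_itv /= le_at (le_trans ty yb).
have aeF := ae_filter_ringOfSetsType (@lebesgue_measure R).
apply: filterS (lebesgue_differentiation (integrable_locally_restrict _ intf)) => //.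
move=> x lpx /andP[ax xb].
have ax' : (BLeft a < BRight x)%E by rewrite /= lte_fin.
have [dI dIx] := FTC1_lebesgue_pt xb intfab ax' lpx.
have -> : f x = fab x by rewrite (fab_itv x x (ltW xb)) // in_itv /= lexx (ltW ax).
rewrite -dIx derive1E.
apply: near_eq_is_derive (derivableP dI); near=> y.
apply: eq_Rintegral => t; rewrite inE; apply: fab_itv.
by near: y; exact: lt_le_nbhsl.
Unshelve. all: by end_near.
Qed.

Lemma gfun_eq0_sqr (R : realType) (t1 b t : R) (F rho : R -> R) : t != 0 ->
  gfun t1 F rho b t = 0 ->
  F t ^+ 2 = - (b - F t1 ^+ 2 / t1 +
    \int[lebesgue_measure]_(s in `[t1, t]) (rho s - derive1 F s ^+ 2)) * t.
Proof.
rewrite /gfun => t0; set J := \int[_]_(_ in _) _ => g0.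
have e : F t ^+ 2 / t = - (b - F t1 ^+ 2 / t1 + J) by lra.
by rewrite -e divfK.
Qed.

Section gfun_vanishing.
Variables (R : realType) (t1 t2 b s1 s2 : R) (F rho : R -> R).
Local Notation mu := (@lebesgue_measure R).
Hypotheses (t1_gt0 : 0 < t1) (t1s1 : t1 <= s1) (s2t2 : s2 <= t2).
Hypothesis acF : abs_continuous t1 t2 F.
Hypothesis cF : concave_on t1 t2 F.
Hypothesis int_g :
  mu.-integrable `[t1, t2] (EFin \o (fun s => rho s - derive1 F s ^+ 2)).
Hypothesis g0 : forall t, s1 <= t <= s2 -> gfun t1 F rho b t = 0.

Lemma gfun_eq0_ae_rho : {ae mu, forall x, s1 < x < s2 ->
  derivable F x 1 /\ rho x = (derive1 F x - F x / x) ^+ 2}.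
Proof.
have aeF := ae_filter_ringOfSetsType mu.
have nZ : {ae mu, forall x, ~ (t1 < x < t2 /\ F x = 0 /\ ~ derivable F x 1)}.
  by apply: negligibleS (concave_on_nonderivable_zeros_negligible cF) => x /= /contrapT.
apply: filterS2 (ae_is_derive_Rintegral int_g) nZ => x dIx nZx /andP[s1x xs2].
have [t1x xt2] : t1 < x /\ x < t2 by split; [exact: le_lt_trans s1x|exact: lt_le_trans s2t2].
have x0 : 0 < x by exact: lt_trans t1x.
set I := fun y => \int[mu]_(s in `[t1, y]) (rho s - derive1 F s ^+ 2) in dIx.
set c := b - F t1 ^+ 2 / t1.
have FG : \forall y \near x, - (c + I y) * y = F y ^+ 2.
  have xs : x \in `]s1, s2[ by rewrite in_itv /= s1x.
  near=> y; have /[!in_itv] /andP[s1y ys2] : y \in `]s1, s2[ by near: y; exact: near_in_itvoo.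
  have y0 : 0 < y by apply: lt_le_trans t1_gt0 (le_trans t1s1 (ltW s1y)).
  by rewrite (gfun_eq0_sqr (lt0r_neq0 y0) (g0 _)) // !ltW.
set f := rho x - derive1 F x ^+ 2 in dIx.
have {}dIx : is_derive x 1 I f by apply: dIx; rewrite t1x.
have dG : is_derive x 1 (fun y => - (c + I y) * y) (- (c + I x) - x * f).
  have := is_deriveM (is_deriveN (is_deriveD (is_derive_cst c x 1) dIx)) (is_derive_id x 1).
  by move/is_derive_eq; apply; rewrite /= add0r scaler1 scalerN.
have dF2 := near_eq_is_derive FG dG.
have dF : derivable F x 1.
  (* at a zero of F the derivability of F^2 is useless: such points form the null set of nZ *)
  have [Fx0|Fx0] := eqVneq (F x) 0.
    by apply: contrapT => ndF; apply: nZx; rewrite t1x xt2.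
  apply: derivable_of_sqr Fx0 _; last by case: dF2.
  by apply: abs_continuous_continuous acF _; rewrite t1x.
split => //.
have cI : - (c + I x) = F x ^+ 2 / x.
  have xs : s1 <= x <= s2 by rewrite !ltW.
  by rewrite (gfun_eq0_sqr (lt0r_neq0 x0) (g0 xs)) mulfK ?lt0r_neq0.
have := is_deriveX 2 (derivableP dF); rewrite -derive1E.
have -> : F ^+ 2 = (fun y => F y ^+ 2) by apply/funext => y; rewrite exprfctE.
case=> _; rewrite (@derive_val _ _ _ _ _ _ _ dF2) cI /f => e.
apply: (mulfI (lt0r_neq0 x0)).
set d := derive1 F x in e *; set r := rho x in e *.
have -> : x * r = F x ^+ 2 / x + x * d ^+ 2 - 2 * F x * d.
  move: e; rewrite expr1 /GRing.scale /=; lra.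
by field; rewrite lt0r_neq0.
Unshelve. all: by end_near.
Qed.

Hypothesis s12 : s1 < s2.
Hypothesis rho_ge0 : forall t, t1 <= t <= t2 -> 0 <= rho t.
Hypothesis rho_noninc : forall x y, t1 <= x -> x <= y -> y <= t2 -> rho y <= rho x.
Hypothesis dF_le : forall t, t1 < t < t2 -> derivable F t 1 -> derive1 F t <= F t / t.

Lemma gfun_eq0_split : exists r : R -> R, [/\
  abs_continuous s1 s2 r, abs_continuous s1 s2 (fun t => F t / t - r t) &
  {ae mu, forall t, s1 <= t <= s2 -> F t / t - r t = derive1 F t /\ r t ^+ 2 = rho t}].
Proof.
have s1_gt0 : 0 < s1 by exact: lt_le_trans t1s1.
have in_t12 t : s1 <= t <= s2 -> t1 <= t <= t2.
  by case/andP=> s1t ts2; rewrite (le_trans t1s1 s1t) (le_trans ts2 s2t2).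
pose B t := Num.sqrt (rho t).
pose D x := s1 < x < s2 /\ derivable F x 1 /\ rho x = (derive1 F x - F x / x) ^+ 2.
have ac_phi : abs_continuous s1 s2 (fun t => F t / t).
  exact/abs_continuous_div_id/(abs_continuous_subitv t1s1 s2t2 acF).
have B_noninc x y : s1 <= x -> x <= y -> y <= s2 -> B y <= B x.
  move=> s1x xy ys2; have xs : s1 <= x <= s2 by rewrite s1x (le_trans xy).
  have ys : s1 <= y <= s2 by rewrite ys2 (le_trans s1x).
  have /andP[t1x _] := in_t12 _ xs; have /andP[_ yt2] := in_t12 _ ys.
  by rewrite ler_sqrt ?rho_ge0 ?in_t12 //; exact: rho_noninc.
have DF x : D x -> derive1 F x = F x / x - B x.
  move=> [/andP[s1x xs2] [dx rx]].
  have xt : t1 < x < t2 by rewrite (le_lt_trans t1s1 s1x) (lt_le_trans xs2 s2t2).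
  have dx_le := dF_le xt dx.
  by rewrite /B rx sqrtr_sqr ler0_norm ?subr_le0 //; ring.
have D_dense u v : s1 <= u -> u < v -> v <= s2 -> exists x, u < x < v /\ D x.
  move=> s1u uv vs2; have [x [/andP[ux xv] gx]] := ae_exists_in_itv uv gfun_eq0_ae_rho.
  have xs : s1 < x < s2 by rewrite (le_lt_trans s1u ux) (lt_le_trans xv vs2).
  by exists x; rewrite ux xv; split => //; split => //; exact: gx.
have phi_B_D x y : D x -> D y -> x < y ->
    F y / y - F x / x <= B y - B x.
  move=> Dx Dy xy; have [/andP[s1x _] [dx _]] := Dx; have [/andP[_ ys2] [dy _]] := Dy.
  have := concave_on_derive1_nonincreasing cF (le_trans t1s1 (ltW s1x)) xy
    (le_trans (ltW ys2) s2t2) dx dy.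
  by rewrite (DF x Dx) (DF y Dy); lra.
have [r [rB split_r]] := dense_split_extend ac_phi B_noninc D_dense phi_B_D s12.
have [ac_r ac_h] := abs_continuous_nonincreasing_split ac_phi split_r.
exists r; split => //.
have aeF := ae_filter_ringOfSetsType mu.
apply: ae_itv_oo_cc; apply: filterS gfun_eq0_ae_rho => x good xs.
have Dx : D x by split; last exact: good.
rewrite rB // -(DF x Dx) /B sqr_sqrtr //; apply/rho_ge0/in_t12.
by case/andP: xs => s1x xs2; rewrite !ltW.
Qed.
End gfun_vanishing.

Lemma feasible_integrable_g (R : realType) (t1 x1 t2 x2 b : R) (F rho : R -> R) :
  feasible t1 x1 t2 x2 b F rho ->
  (@lebesgue_measure R).-integrable `[t1, t2]
    (EFin \o (fun s => rho s - derive1 F s ^+ 2)).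
Proof.
case=> _ [_ [_ [_ [_ [int_rho [int_dF2 _]]]]]].
have -> : EFin \o (fun s => rho s - derive1 F s ^+ 2) =
    (fun s => (rho s)%:E - (derive1 F s ^+ 2)%:E)%E by apply/funext.
exact: integrableB.
Qed.

Theorem lemma12 (R : realType) (t1 x1 t2 x2 b : R) (F rho : R -> R)
    (s1 s2 : R) :
  0 < t1 -> t1 < t2 -> x2 / t2 < x1 / t1 ->
  0 <= b ->
  b <= (x2 - x1) ^+ 2 / (t2 - t1) + x1 ^+ 2 / t1 - x2 ^+ 2 / t2 ->
  feasible t1 x1 t2 x2 b F rho ->
  (forall G sigma, feasible t1 x1 t2 x2 b G sigma ->
     (I2 t1 t2 rho <= I2 t1 t2 sigma)%E) ->
  concave_on t1 t2 F ->
  (forall t, t1 < t < t2 -> derivable F t 1 -> derive1 F t <= F t / t) ->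
  (forall x y, t1 <= x -> x <= y -> y <= t2 -> rho y <= rho x) ->
  t1 <= s1 -> s1 < s2 -> s2 <= t2 ->
  (forall t, s1 <= t <= s2 -> gfun t1 F rho b t = 0) ->
  (exists2 h : R -> R, abs_continuous s1 s2 h &
     {ae (@lebesgue_measure R), forall t, s1 <= t <= s2 -> h t = derive1 F t}) /\
  (exists2 r : R -> R, abs_continuous s1 s2 r &
     {ae (@lebesgue_measure R), forall t, s1 <= t <= s2 -> r t = rho t}).
Proof.
move=> t1_gt0 _ _ _ _ feas _ cF dF_le rho_noninc t1s1 s12 s2t2 g0.
have [acF [_ [_ [_ [rho_ge0 _]]]]] := feas.
have [r [ac_r ac_h ae_hr]] := gfun_eq0_split t1_gt0 t1s1 s2t2 acF cF
  (feasible_integrable_g feas) g0 s12 rho_ge0 rho_noninc dF_le.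
have aeF := ae_filter_ringOfSetsType (@lebesgue_measure R).
split; [exists (fun t => F t / t - r t) | exists (fun t => r t ^+ 2)].
- exact: ac_h.
- by apply: filterS ae_hr => t hr /hr[].
- exact: abs_continuous_sqr.
- by apply: filterS ae_hr => t hr /hr[].
Qed.
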